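(* Let $k\geq 2$ be an integer and let $G_k(x,t)=\sum_{n\geq 0}\sum_{w\in[k]^n} t^{\mathrm{cs}(w)}x^n$. Put $\phi=\dfrac{1-x(t-1)}{2x(t-1)}$ and \[\gamma(x,t)=\frac{k}{1-3x(t-1)}-\frac{2x(t-1)}{(1-3x(t-1))^{2}}\cdot\frac{U_{k}(\phi)-U_{k-1}(\phi)-1}{U_{k}(\phi)}.\] Then \begin{align*} G_k(x,t)=1+\frac{1+3x(t-1)}{(1-3x(t-1))(1+x(t-1))}\Bigg[&\frac{1}{1-x\gamma(x,t)}\\ &-\frac{2x(t-1)(k+1)}{(1+3x(t-1))U_{k}(\phi)}\left(\frac{1-x\,\frac{1+k-U_{k}(\phi)}{1-3x(t-1)}}{1-x\gamma(x,t)}+U_{k-1}(\phi)-1\right)+kx(t-1)-1\Bigg]. \end{align*}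
   Context: For an integer $k\geq 2$, $[k]=\{1,2,\ldots,k\}$ and a word over $k$ of length $n$ is an element $w=w_1\cdots w_n\in[k]^n$ ($[k]^0$ consists of the empty word). For such $w$, $\mathrm{cs}(w)$ is the number of indices $0\leq i\leq n-1$ with $|w_{i+1}-w_i|\leq 1$, where $w_0$ means $w_n$ (so $\mathrm{cs}$ of the empty word is $0$ and $\mathrm{cs}(w)=1$ for a word of length $1$). $U_n$ denotes the Chebyshev polynomial of the second kind: $U_0(x)=1$, $U_1(x)=2x$, $U_{n+1}(x)=2xU_n(x)-U_{n-1}(x)$. The identity is an identity of rational functions in $x,t$ (equivalently of formal power series in $x$ with coefficients polynomial in $t$). *)

From HB Require Import structures.
From mathcomp Require Import all_boot all_order all_algebra.
From mathcomp Require Import all_classical all_reals all_analysis.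
Set Implicit Arguments. Unset Strict Implicit. Unset Printing Implicit Defensive.
Import Order.TTheory GRing.Theory Num.Theory.
Local Open Scope ring_scope.

Fixpoint chebU {R : ringType} (n : nat) (z : R) : R :=
  match n with
  | 0 => 1
  | 1 => 2 * z
  | (m.+1 as p).+1 => 2 * z * chebU p z - chebU m z
  end.

(* A word of length n over [k] is w : {ffun 'I_n -> 'I_k}; letter j+1 is coded
   by j : 'I_k (cs only depends on differences of letters). *)
(* cs(w) = #{ i : |w_{i+1} - w_i| <= 1 } with cyclic convention w_0 = w_n;
   in 0-based indices: pairs (w (i+1 mod n), w i). *)
Definition cs (n k : nat) (w : {ffun 'I_n -> 'I_k}) : nat :=
  #|[pred i : 'I_n | ((w (ordS i) : nat) <= (w i).+1)%N
                     && ((w i : nat) <= (w (ordS i)).+1)%N]|.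

Definition Gcoef {R : ringType} (k : nat) (t : R) (n : nat) : R :=
  \sum_(w : {ffun 'I_n -> 'I_k}) t ^+ cs w.

Definition phi {R : fieldType} (x t : R) : R :=
  (1 - x * (t - 1)) / (2 * x * (t - 1)).

Definition gamma {R : fieldType} (k : nat) (x t : R) : R :=
  let y := x * (t - 1) in
  let p := phi x t in
  k%:R / (1 - 3 * y)
  - (2 * y / (1 - 3 * y) ^+ 2) * ((chebU k p - chebU k.-1 p - 1) / chebU k p).

Definition Gk_closed {R : fieldType} (k : nat) (x t : R) : R :=
  let y := x * (t - 1) in
  let p := phi x t in
  let g := gamma k x t in
  1 + (1 + 3 * y) / ((1 - 3 * y) * (1 + y)) *
      ( 1 / (1 - x * g)
        - (2 * y * (k.+1)%:R) / ((1 + 3 * y) * chebU k p) *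
          ( (1 - x * ((1 + k%:R - chebU k p) / (1 - 3 * y))) / (1 - x * g)
            + chebU k.-1 p - 1 )
        + k%:R * y - 1 ).

From HB Require Import structures.
From mathcomp Require Import all_boot all_order all_algebra.
From mathcomp Require Import all_classical all_reals all_analysis.
From mathcomp Require Import ring lra zify.
Import Order.TTheory GRing.Theory Num.Theory numFieldNormedType.Exports.
Local Open Scope classical_set_scope.
Local Open Scope ring_scope.

(* For n >= 1 the coefficient of x^n in G_k is tr(M^n), where M is the k x k
   transfer matrix with M_ab = t if |a - b| <= 1 and 1 otherwise; hence
   G_k = 1 - k + tr((1 - xM)^-1) for small x.  With y = x(t - 1) and u the
   all-ones vector, 1 - xM = B - x u u^T where B = 1 - yT is tridiagonal
   Toeplitz, so B^-1 has entries U_i(phi) U_(k-1-j)(phi) / (y U_k(phi)) for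
   i <= j, and Sherman-Morrison inverts the rank-one perturbation; gamma is
   u^T B^-1 u.  The trace then reduces to sums of U_i, U_i^2 and
   U_i U_(k-1-i), which have closed forms by the recurrence and Cassini's
   identity.  The conditions U_k(phi) <> 0 and 1 - x gamma <> 0 hold for
   small x because 1 - P has a trivial kernel whenever P has small entries:
   B and 1 - xM would otherwise kill (U_i(phi))_i and B^-1 u. *)

Section Chebyshev.
Context {R : comNzRingType} (z : R).

(* [chebW n] is U_(n-1)(z), with U_(-1) = 0, so that the recurrence holds
   from n = 0. *)
Fixpoint chebW (n : nat) : R :=
  match n with
  | 0 => 0
  | 1 => 1
  | (m.+1 as p).+1 => 2 * z * chebW p - chebW m
  end.

Lemma chebW0 : chebW 0 = 0. Proof. by []. Qed.
Lemma chebW1 : chebW 1 = 1. Proof. by []. Qed.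
Lemma chebWSS n : chebW n.+2 = 2 * z * chebW n.+1 - chebW n. Proof. by []. Qed.

#[global] Arguments chebW : simpl never.

Lemma chebU_chebW n : chebU n z = chebW n.+1.
Proof.
suff : chebU n z = chebW n.+1 /\ chebU n.+1 z = chebW n.+2 by case.
elim: n => [|n [IH1 IH2]]; first by split => /=; rewrite ?chebWSS ?chebW0 ?chebW1; ring.
by split=> //; rewrite [LHS]/= -/(chebU n.+1 z) -/(chebU n z) IH1 IH2.
Qed.

Lemma chebW_addn a b :
  chebW a.+1 * chebW b.+1 - chebW a * chebW b = chebW (a + b).+1.
Proof.
elim: a b => [|a IH] b; first by rewrite chebW0 chebW1 mul0r subr0 mul1r.
by rewrite addSnnS -(IH b.+1) !chebWSS; ring.
Qed.

Lemma chebW_cassini n : chebW n.+1 ^+ 2 - chebW n.+2 * chebW n = 1.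
Proof.
elim: n => [|n IH]; first by rewrite chebWSS chebW0 chebW1; ring.
by rewrite -[RHS]IH !chebWSS; ring.
Qed.

Lemma sum_chebW n :
  (2 * z - 2) * \sum_(i < n) chebW i.+1 = chebW n.+1 - chebW n - 1.
Proof.
elim: n => [|n IH]; first by rewrite big_ord0 chebW0 chebW1; ring.
by rewrite big_ord_recr /= mulrDr IH chebWSS; ring.
Qed.

Lemma sum_chebW_sqr n :
  2 * (1 - z ^+ 2) * \sum_(i < n) chebW i.+1 ^+ 2
  = n%:R + 1 - chebW n.+1 ^+ 2 + z * chebW n.+1 * chebW n.
Proof.
elim: n => [|n IH]; first by rewrite big_ord0 chebW0 chebW1; ring.
have C := chebW_cassini n; rewrite chebWSS in C *.
rewrite big_ord_recr /= mulrDr IH.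
apply/eqP; rewrite -subr_eq0; apply/eqP.
by rewrite -(subrr 1) -[X in _ = X - _]C -natr1; ring.
Qed.

Definition chebW_conv n := \sum_(i < n) chebW i.+1 * chebW (n - i).

Lemma chebW_convSS n :
  chebW_conv n.+2 = 2 * z * chebW_conv n.+1 - chebW_conv n + chebW n.+2.
Proof.
have -> : chebW_conv n.+2 = \sum_(i < n.+1) chebW i.+1 * chebW (n.+2 - i) + chebW n.+2.
  by rewrite /chebW_conv big_ord_recr /= subSnn chebW1 mulr1.
have -> : chebW_conv n = \sum_(i < n.+1) chebW i.+1 * chebW (n - i).
  by rewrite /chebW_conv big_ord_recr /= subnn chebW0 mulr0 addr0.
congr (_ + _); rewrite mulr_sumr -sumrB; apply: eq_bigr => i _.
have [-> ->] : (n.+2 - i = (n - i).+2 /\ n.+1 - i = (n - i).+1)%N.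
  by have := ltn_ord i; lia.
by rewrite chebWSS; ring.
Qed.

Lemma chebW_conv_closed n :
  2 * (z ^+ 2 - 1) * chebW_conv n = n%:R * z * chebW n.+1 - n.+1%:R * chebW n.
Proof.
suff : 2 * (z ^+ 2 - 1) * chebW_conv n = n%:R * z * chebW n.+1 - n.+1%:R * chebW n /\
       2 * (z ^+ 2 - 1) * chebW_conv n.+1 = n.+1%:R * z * chebW n.+2 - n.+2%:R * chebW n.+1.
  by case.
elim: n => [|n [IH1 IH2]].
  by rewrite /chebW_conv !big_ord0 big_ord1 /= subn0 chebWSS chebW0 chebW1; split; ring.
split=> //; rewrite chebW_convSS.
transitivity (2 * z * (2 * (z ^+ 2 - 1) * chebW_conv n.+1)
  - 2 * (z ^+ 2 - 1) * chebW_conv n + 2 * (z ^+ 2 - 1) * chebW n.+2); first ring.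
by rewrite IH1 IH2 !chebWSS -!natr1; ring.
Qed.
End Chebyshev.

Section Walks.
Variables (R : comNzRingType) (k : nat) (A : 'M[R]_k.+1).
Local Notation T := 'I_k.+1.

Lemma inord0 m : (inord 0 : 'I_m.+1) = ord0.
Proof. by apply/val_inj; rewrite /= inordK. Qed.

Lemma inord_overflow m : (inord m.+1 : 'I_m.+1) = ord0.
Proof. by apply/val_inj; rewrite /inord /insubd insubF //= ltnn. Qed.

Lemma inordS_ordS m (i : 'I_m.+1) : (inord i.+1 : 'I_m.+1) = ordS i.
Proof.
apply/val_inj => /=; have := ltn_ord i.
rewrite leq_eqVlt => /predU1P[iSm|im]; last by rewrite inordK // modn_small.
by rewrite iSm modnn inord_overflow.
Qed.

Definition walk_weight m (w : {ffun 'I_m.+1 -> T}) : R :=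
  \prod_(i < m) A (w (inord i)) (w (inord i.+1)).
Arguments walk_weight {m} w.

Definition cons_walk m (a : T) (v : {ffun 'I_m.+1 -> T}) : {ffun 'I_m.+2 -> T} :=
  [ffun i : 'I_m.+2 => if (i : nat) is j.+1 then v (inord j) else a].

Definition behead_walk m (w : {ffun 'I_m.+2 -> T}) : {ffun 'I_m.+1 -> T} :=
  [ffun j : 'I_m.+1 => w (inord j.+1)].
Arguments behead_walk {m} w.

Lemma cons_walk0 m a v : cons_walk m a v (inord 0) = a.
Proof. by rewrite ffunE inordK. Qed.

Lemma cons_walkS m a v j : (j <= m)%N -> cons_walk m a v (inord j.+1) = v (inord j).
Proof. by move=> jm; rewrite ffunE inordK. Qed.

Lemma cons_walkK m a : cancel (cons_walk m a) behead_walk.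
Proof.
move=> v; apply/ffunP => j; have jm := ltn_ord j.
by rewrite !ffunE inordK //; congr (v _); apply/val_inj; rewrite /= inordK.
Qed.

Lemma behead_walkK m a (w : {ffun 'I_m.+2 -> T}) :
  w (inord 0) = a -> cons_walk m a (behead_walk w) = w.
Proof.
move=> w0; apply/ffunP => -[[|j] jm]; rewrite ffunE /=.
  by rewrite -w0; congr (w _); apply/val_inj; rewrite /= inordK.
by rewrite ffunE inordK //; congr (w _); apply/val_inj; rewrite /= inordK.
Qed.

Lemma walk_weight_cons m a v :
  walk_weight (cons_walk m a v) = A a (v (inord 0)) * walk_weight v.
Proof.
rewrite /walk_weight big_ord_recl cons_walk0 cons_walkS //; congr (_ * _).
by apply: eq_bigr => i _; rewrite lift0 !cons_walkS //; have := ltn_ord i; lia.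
Qed.

Lemma mxpow_walks m a b : (A ^+ m) a b =
  \sum_(w : {ffun 'I_m.+1 -> T} | (w (inord 0) == a) && (w (inord m) == b)) walk_weight w.
Proof.
elim: m a => [|m IH] a.
  rewrite expr0 mxE inord0; have [<-|nab] := eqVneq a b.
    rewrite (big_pred1 [ffun => a]) /walk_weight ?big_ord0 // => w; rewrite andbb.
    apply/eqP/eqP => [wa|->]; last by rewrite ffunE.
    by apply/ffunP => i; rewrite ffunE (ord1 i) wa.
  by rewrite big_pred0 // => w; apply: contraNF nab => /andP[/eqP <- /eqP <-].
rewrite exprS mxE.
under eq_bigr => c _ do rewrite IH mulr_sumr.
rewrite (reindex_onto (cons_walk m a) behead_walk); last first.
  by move=> w /andP[/eqP w0 _]; apply: behead_walkK.
rewrite [RHS](partition_big (fun v : {ffun 'I_m.+1 -> T} => v (inord 0)) xpredT) //.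
apply: eq_bigr => c _; apply: eq_big => [v|v /andP[/eqP <- _]].
  by rewrite cons_walkK cons_walk0 eqxx cons_walkS // eqxx andbT andbC.
by rewrite walk_weight_cons.
Qed.

(* Since [inord] sends out-of-range indices to [ord0], [close_walk u] is the
   closed walk [u 0, ..., u m, u 0]. *)
Definition close_walk m (u : {ffun 'I_m.+1 -> T}) : {ffun 'I_m.+2 -> T} :=
  [ffun i : 'I_m.+2 => u (inord i)].

Definition open_walk m (w : {ffun 'I_m.+2 -> T}) : {ffun 'I_m.+1 -> T} :=
  [ffun j : 'I_m.+1 => w (inord j)].
Arguments open_walk {m} w.

Lemma close_walkE m u j : (j <= m.+1)%N -> close_walk m u (inord j) = u (inord j).
Proof. by move=> jm; rewrite ffunE inordK. Qed.

Lemma close_walk_closed m u : close_walk m u (inord 0) = close_walk m u (inord m.+1).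
Proof. by rewrite !close_walkE // inord_overflow inord0. Qed.

Lemma close_walkK m : cancel (close_walk m) open_walk.
Proof.
move=> u; apply/ffunP => j; have jm := ltn_ord j.
rewrite ffunE close_walkE; last by lia.
by congr (u _); apply/val_inj; rewrite /= inordK.
Qed.

Lemma open_walkK m (w : {ffun 'I_m.+2 -> T}) :
  w (inord 0) = w (inord m.+1) -> close_walk m (open_walk w) = w.
Proof.
move=> w0; apply/ffunP => i; rewrite !ffunE.
have [im|mi] := ltnP i m.+1; first by congr (w _); apply/val_inj; rewrite /= !inordK.
have iE : (i : nat) = m.+1 by have := ltn_ord i; lia.
have -> : (inord i : 'I_m.+1) = ord0 by rewrite iE inord_overflow.
have -> : i = inord m.+1 by apply/val_inj; rewrite /= iE inordK.
by rewrite -w0; congr (w _); apply/val_inj; rewrite /= inordK.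
Qed.

Lemma walk_weight_close m u :
  walk_weight (close_walk m u) = \prod_(i < m.+1) A (u i) (u (ordS i)).
Proof.
apply: eq_bigr => i _; have im := ltn_ord i.
by rewrite !close_walkE ?inord_val ?inordS_ordS // ltnW.
Qed.

Lemma mxtrace_exp m : \tr (A ^+ m.+1) =
  \sum_(u : {ffun 'I_m.+1 -> T}) \prod_(i < m.+1) A (u i) (u (ordS i)).
Proof.
transitivity (\sum_(w : {ffun 'I_m.+2 -> T} | w (inord 0) == w (inord m.+1))
                walk_weight w).
  rewrite /mxtrace (partition_big (fun w : {ffun 'I_m.+2 -> T} => w (inord 0)) xpredT) //.
  apply: eq_bigr => a _; rewrite mxpow_walks; apply: eq_bigl => w.
  by apply/andP/andP => -[/eqP w0 /eqP wm]; split; apply/eqP; congruence.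
rewrite (reindex_onto (close_walk m) open_walk) => [|w /eqP /open_walkK //].
apply: eq_big => [u|u _]; last exact: walk_weight_close.
by rewrite close_walk_closed close_walkK !eqxx.
Qed.

End Walks.

Definition adjacent (i j : nat) : bool := (j <= i.+1)%N && (i <= j.+1)%N.

Lemma adjacentE i j : adjacent i j = [|| j == i, j.+1 == i | j == i.+1].
Proof. by rewrite /adjacent; case: (ltngtP j i); lia. Qed.

Definition transfer_mx {R : nzRingType} k (t : R) : 'M[R]_k :=
  \matrix_(a, b) if adjacent a b then t else 1.

Lemma Gcoef0 (R : nzRingType) k (t : R) : Gcoef k t 0 = 1.
Proof.
rewrite /Gcoef (eq_bigr (fun _ => 1)) => [|w _]; last by rewrite /cs eq_card0 // => -[].
by rewrite sumr_const card_ffun card_ord card_ord.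
Qed.

Lemma Gcoef_mxtrace (R : comNzRingType) k (t : R) m :
  Gcoef k.+1 t m.+1 = \tr (transfer_mx k.+1 t ^+ m.+1).
Proof.
rewrite mxtrace_exp /Gcoef; apply: eq_bigr => u _.
rewrite /cs -prodr_const big_mkcond; apply: eq_bigr => i _.
by rewrite mxE inE.
Qed.

Lemma Gk_closed_chebW_sums (R : numFieldType) (n : nat) (x t S Q V : R) :
  let y := x * (t - 1) in
  let z := (1 - y) / (2 * y) in
  let p := chebW z n.+2 in
  let q := chebW z n.+1 in
  let K : R := n.+1%:R in
  let c0 := 1 / (1 - 3 * y) in
  x != 0 -> t - 1 != 0 -> p != 0 ->
  1 - 3 * y != 0 -> 1 + y != 0 -> 1 + 3 * y != 0 ->
  1 - x * (c0 * (K - 2 * S / p)) != 0 ->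
  (2 * z - 2) * S = p - q - 1 ->
  2 * (1 - z ^+ 2) * Q = K + 1 - p ^+ 2 + z * p * q ->
  2 * (z ^+ 2 - 1) * V = K * z * p - n.+2%:R * q ->
  Gk_closed n.+1 x t = 1 - K + (V / (p * y) + x / (1 - x * (c0 * (K - 2 * S / p)))
     * (c0 ^+ 2 * (K - 4 * S / p + 2 * (Q + V) / p ^+ 2))).
Proof.
move=> y z p q K c0 x0 t1 p0 h13 h1 h3 hg hS hQ hV.
have y0 : y != 0 by rewrite mulf_neq0.
have z21 : z ^+ 2 - 1 = ((1 - 3 * y) * (1 + y)) / (4 * y ^+ 2).
  by rewrite /z; field; rewrite ?x0 ?t1.
have z12 : 1 - z ^+ 2 = - ((1 - 3 * y) * (1 + y)) / (4 * y ^+ 2).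
  by rewrite -opprB z21 mulNr.
have z2 : 2 * z - 2 = (1 - 3 * y) / y by rewrite /z; field; rewrite ?x0 ?t1.
have eS : S = y * (p - q - 1) / (1 - 3 * y).
  apply: (@mulfI _ (2 * z - 2)); first by rewrite z2 mulf_neq0 ?invr_eq0.
  by rewrite hS z2; field; rewrite ?x0 ?t1 ?h13.
have nQ : 2 * (1 - z ^+ 2) != 0.
  by rewrite z12 !mulf_neq0 ?oppr_eq0 ?invr_eq0 ?mulf_neq0 ?expf_neq0.
have nV : 2 * (z ^+ 2 - 1) != 0.
  by rewrite z21 !mulf_neq0 ?invr_eq0 ?mulf_neq0 ?expf_neq0.
have eQ : Q = (K + 1 - p ^+ 2 + z * p * q) / (2 * (1 - z ^+ 2)).
  by apply: (mulfI nQ); rewrite hQ [RHS]mulrC divfK.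
have eV : V = (K * z * p - (K + 1) * q) / (2 * (z ^+ 2 - 1)).
  by apply: (mulfI nV); rewrite hV [RHS]mulrC divfK // /K natr1.
rewrite /Gk_closed /gamma /phi !chebU_chebW /= -[2 * x * (t - 1)]mulrA.
rewrite -/y -/z -/p -/q -(natr1 n.+1) -/K eS eQ eV z12 z21 /c0 /z.
move: hg; rewrite eS /c0 => hg.
field; rewrite ?x0 ?t1 ?p0 ?h13 ?h1 ?h3 ?y0 /= ?andbT.
match goal with |- is_true (?E != 0) =>
  have -> : E = (1 - x * (1 / (1 - 3 * y) * (K - 2 * (y * (p - q - 1) / (1 - 3 * y)) / p)))
                * ((1 - 3 * y) ^+ 2 * p) by rewrite /K; field; rewrite ?h13 ?p0 end.
by rewrite !mulf_neq0 // expf_neq0.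
Qed.

Lemma sum_ord_delta {R : nzRingType} K (F : nat -> R) m :
  \sum_(l < K) ((l : nat) == m)%:R * F l = if (m < K)%N then F m else 0.
Proof.
have [mK|Km] := ltnP; last first.
  by rewrite big1 // => l _; have := ltn_ord l; case: eqP => [->|_]; [lia | rewrite mul0r].
rewrite (bigD1 (Ordinal mK)) //= eqxx mul1r big1 ?addr0 // => l lm.
by case: eqP => [lE|_]; [case/eqP: lm; apply/val_inj | rewrite mul0r].
Qed.

Lemma sum_ord_rev {R : nzRingType} K (F : nat -> R) :
  \sum_(i < K) F (K - i)%N = \sum_(i < K) F i.+1.
Proof.
rewrite (reindex_inj rev_ord_inj) /=; apply: eq_bigr => i _.
by congr F; have := ltn_ord i; lia.
Qed.

Section Inverse.
Context {R : numFieldType} (n : nat) (x t : R).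
Local Notation K := n.+1.
Local Notation y := (x * (t - 1)).
Local Notation z := ((1 - y) / (2 * y)).
Local Notation p := (chebW z K.+1).
Local Notation c0 := (1 / (1 - 3 * y)).
Hypotheses (x_neq0 : x != 0) (t_neq1 : t - 1 != 0).

Definition prev_val (F : nat -> R) (i : nat) := if i is i'.+1 then F i' else 0.

Definition adj_mx : 'M[R]_K := \matrix_(i, j) (adjacent i j)%:R.
Definition tri_mx : 'M[R]_K := 1%:M - y *: adj_mx.

Lemma tri_mx_mulE (F : nat -> R) (i : 'I_K) : F K = 0 ->
  \sum_(l < K) tri_mx i l * F l = y * (2 * z * F i - prev_val F i - F i.+1).
Proof.
move=> FK.
have E (l : 'I_K) : tri_mx i l * F l =
    (1 - y) * (((l : nat) == i)%:R * F l) - y * ((l.+1 == i)%:R * F l)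
    - y * (((l : nat) == i.+1)%:R * F l).
  rewrite !mxE adjacentE eq_sym -val_eqE /=.
  case E1 : ((l : nat) == i); case E2 : (l.+1 == i); case E3 : ((l : nat) == i.+1);
    rewrite /= ?mul0r ?mul1r ?mulr0 ?subr0 ?addr0; try ring; exfalso; lia.
rewrite (eq_bigr _ (fun l _ => E l)) !sumrB -!mulr_sumr !sum_ord_delta ltn_ord.
have -> : \sum_(l < K) (l.+1 == i)%:R * F l = prev_val F i.
  move: (ltn_ord i); case: (nat_of_ord i) => [|i'] iK /=.
    by rewrite big1 // => l _; rewrite mul0r.
  under eq_bigr => l _ do rewrite eqSS.
  by rewrite sum_ord_delta ltnW.
have -> : (if (i.+1 < K)%N then F i.+1 else 0) = F i.+1.
  by case: ltnP => // Ki; have -> : i.+1 = K by have := ltn_ord i; lia.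
by field; rewrite ?x_neq0 ?t_neq1.
Qed.

Lemma tri_mx_chebW : p = 0 -> tri_mx *m (\col_i chebW z i.+1) = 0.
Proof.
move=> p0; apply/matrixP => i j; rewrite [LHS]mxE [RHS]mxE.
under eq_bigr => l _ do rewrite [(\col__ _) _ _]mxE.
rewrite (tri_mx_mulE (fun l => chebW z l.+1)) //.
have -> : prev_val (fun l => chebW z l.+1) i = chebW z i by case: (nat_of_ord i).
by rewrite chebWSS subrr mulr0.
Qed.

Hypotheses (p_neq0 : p != 0) (one_sub3y_neq0 : 1 - 3 * y != 0).

Local Ltac field_nz := field; rewrite ?x_neq0 ?t_neq1 ?p_neq0 ?one_sub3y_neq0.

Definition tri_inv_entry (i j : nat) : R :=
  chebW z (minn i j).+1 * chebW z (K - maxn i j) / (p * y).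
Definition tri_inv : 'M[R]_K := \matrix_(i, j) tri_inv_entry i j.

Lemma tri_inv_entry_le i j : (i <= j)%N ->
  tri_inv_entry i j = chebW z i.+1 * chebW z (K - j) / (p * y).
Proof. by move=> ij; rewrite /tri_inv_entry (minn_idPl ij) (maxn_idPr ij). Qed.

Lemma tri_inv_entry_ge i j : (j <= i)%N ->
  tri_inv_entry i j = chebW z j.+1 * chebW z (K - i) / (p * y).
Proof. by move=> ji; rewrite /tri_inv_entry (minn_idPr ji) (maxn_idPl ji). Qed.

Lemma tri_mx_inv : tri_mx *m tri_inv = 1%:M.
Proof.
apply/matrixP => i j; rewrite [LHS]mxE [RHS]mxE.
under eq_bigr => l _ do rewrite [tri_inv _ _]mxE.
rewrite (tri_mx_mulE (tri_inv_entry^~ j)); last first.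
  by rewrite tri_inv_entry_ge ?subnn ?chebW0 ?mulr0 ?mul0r // ltnW.
have iK := ltn_ord i.
case: (ltngtP i j) => [ij|ji|/val_inj ij].
- have /negbTE -> : i != j by rewrite -val_eqE /= ltn_eqF.
  have -> : prev_val (tri_inv_entry^~ j) i = chebW z i * chebW z (K - j) / (p * y).
    case: (nat_of_ord i) ij => [|i'] ij /=; first by rewrite chebW0 !mul0r.
    by rewrite tri_inv_entry_le // ltnW // ltnW.
  by rewrite !tri_inv_entry_le // 1?ltnW // [chebW z i.+2]chebWSS /=; field_nz.
- have /negbTE -> : i != j by rewrite -val_eqE /= gtn_eqF.
  have e1 : (K - i = (K - i.+1).+1)%N by lia.
  have -> : prev_val (tri_inv_entry^~ j) i
      = chebW z j.+1 * chebW z (K - i.+1).+2 / (p * y).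
    case: (nat_of_ord i) ji e1 => [|i'] ji e1 //=.
    by rewrite tri_inv_entry_ge //; congr (_ * chebW z _ / _); lia.
  rewrite (tri_inv_entry_ge _ _ (ltnW ji)) (tri_inv_entry_ge _ _ (leqW (ltnW ji))) e1.
  by rewrite [chebW z (K - i.+1).+2]chebWSS /=; field_nz.
- subst j; rewrite eqxx.
  set m := (K - i.+1)%N.
  have e1 : (K - i = m.+1)%N by rewrite /m; lia.
  have -> : prev_val (tri_inv_entry^~ i) i = chebW z i * chebW z m.+1 / (p * y).
    rewrite -e1; case: (nat_of_ord i) => [|i'] /=; first by rewrite chebW0 !mul0r.
    by rewrite tri_inv_entry_le.
  rewrite !tri_inv_entry_ge // e1.
  have := chebW_addn z i.+1 m; rewrite (_ : i.+1 + m = K)%N; last by rewrite /m; lia.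
  rewrite chebWSS => WA.
  transitivity (((2 * z * chebW z i.+1 - chebW z i) * chebW z m.+1
                - chebW z i.+1 * chebW z m) / p); first by field_nz.
  by rewrite WA divff.
Qed.

Lemma tri_inv_tr : tri_inv^T = tri_inv.
Proof. by apply/matrixP => i j; rewrite !mxE /tri_inv_entry minnC maxnC. Qed.

Definition ones : 'cV[R]_K := const_mx 1.

(* [w = tri_inv *m ones], computed in closed form from the row sums of [tri_mx]. *)
Definition w_entry (l : nat) : R := c0 * (1 - (chebW z l.+1 + chebW z (K - l)) / p).
Definition w_col : 'cV[R]_K := \col_i w_entry i.
Definition gam : R := \sum_(i < K) w_entry i.

Lemma tri_mx_w_col : tri_mx *m w_col = ones.
Proof.
apply/matrixP => i j; rewrite [LHS]mxE [RHS]mxE.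
under eq_bigr => l _ do rewrite [w_col _ _]mxE.
rewrite (tri_mx_mulE w_entry); last first.
  by rewrite /w_entry subnn chebW0 addr0 divff // subrr mulr0.
have iK := ltn_ord i.
set m := (K - i.+1)%N.
have e1 : (K - i = m.+1)%N by rewrite /m; lia.
have -> : prev_val w_entry i = c0 * (1 - (chebW z i + chebW z m.+2) / p).
  rewrite -e1; case: (nat_of_ord i) iK => [|i'] iK /=.
    by rewrite subn0 chebW0 add0r divff // subrr mulr0.
  by rewrite /w_entry; congr (_ * (1 - (_ + chebW z _) / _)); lia.
by rewrite /w_entry e1 -/m [chebW z i.+2]chebWSS [chebW z m.+2]chebWSS; field_nz.
Qed.

Lemma one_sub_transfer :
  1%:M - x *: transfer_mx K t = tri_mx - x *: (ones *m ones^T).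
Proof.
apply/matrixP => i j; rewrite !mxE big_ord1 !mxE.
by case: (adjacent i j) => /=; ring.
Qed.

Lemma one_sub_transfer_w_col :
  (1%:M - x *: transfer_mx K t) *m w_col = (1 - x * gam) *: ones.
Proof.
rewrite one_sub_transfer mulmxBl tri_mx_w_col -scalemxAl -mulmxA.
have -> : ones^T *m w_col = gam%:M.
  apply/matrixP => i j; rewrite !ord1 !mxE eqxx mulr1n.
  by apply: eq_bigr => l _; rewrite !mxE mul1r.
by rewrite mul_mx_scalar scalerA scalerBl scale1r.
Qed.

(* Sherman--Morrison inverse of the rank-one perturbation of [tri_mx]. *)
Definition transfer_inv : 'M[R]_K :=
  tri_inv + (x / (1 - x * gam)) *: (w_col *m w_col^T).

Lemma one_sub_transfer_inv : 1 - x * gam != 0 ->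
  (1%:M - x *: transfer_mx K t) *m transfer_inv = 1%:M.
Proof.
move=> g0.
have w_colT : ones^T *m tri_inv = w_col^T.
  apply: trmx_inj; rewrite trmx_mul !trmxK tri_inv_tr -tri_mx_w_col mulmxA.
  by rewrite (mulmx1C tri_mx_inv) mul1mx.
rewrite mulmxDr -scalemxAr mulmxA one_sub_transfer_w_col -scalemxAl scalerA divfK //.
by rewrite one_sub_transfer mulmxBl tri_mx_inv -scalemxAl -mulmxA w_colT subrK.
Qed.

Lemma mxtrace_tri_inv : \tr tri_inv = chebW_conv z K / (p * y).
Proof.
rewrite /mxtrace /chebW_conv mulr_suml; apply: eq_bigr => i _.
by rewrite mxE tri_inv_entry_le.
Qed.

Lemma gamE : gam = c0 * (K%:R - 2 * (\sum_(i < K) chebW z i.+1) / p).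
Proof.
rewrite /gam /w_entry -mulr_sumr; congr (_ * _).
rewrite sumrB sumr_const card_ord -mulr_suml big_split /= (sum_ord_rev _ (chebW z)).
by rewrite -[in RHS](natr1 1); ring.
Qed.

Lemma sum_w_entry_sqr : \sum_(i < K) w_entry i ^+ 2 =
  c0 ^+ 2 * (K%:R - 4 * (\sum_(i < K) chebW z i.+1) / p
             + 2 * (\sum_(i < K) chebW z i.+1 ^+ 2 + chebW_conv z K) / p ^+ 2).
Proof.
have E (i : 'I_K) : w_entry i ^+ 2 = c0 ^+ 2 *
    (1 - 2 / p * chebW z i.+1 - 2 / p * chebW z (K - i)
     + 1 / p ^+ 2 * chebW z i.+1 ^+ 2 + 1 / p ^+ 2 * chebW z (K - i) ^+ 2
     + 2 / p ^+ 2 * (chebW z i.+1 * chebW z (K - i))).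
  by rewrite /w_entry; field_nz.
rewrite (eq_bigr _ (fun i _ => E i)) -mulr_sumr; congr (_ * _).
rewrite !big_split /= !sumrN sumr_const card_ord -!mulr_sumr.
rewrite (sum_ord_rev _ (chebW z)) (sum_ord_rev _ (fun m => chebW z m ^+ 2)) /chebW_conv.
by field_nz.
Qed.

Lemma mxtrace_transfer_inv : 1 - x * gam != 0 -> 1 + y != 0 -> 1 + 3 * y != 0 ->
  \tr transfer_inv = Gk_closed K x t - 1 + K%:R.
Proof.
move=> g0 one_addy_neq0 one_add3y_neq0.
have trww : \tr (w_col *m w_col^T) = \sum_(i < K) w_entry i ^+ 2.
  by apply: eq_bigr => i _; rewrite mxE big_ord1 !mxE expr2.
rewrite (@Gk_closed_chebW_sums _ n x t (\sum_(i < K) chebW z i.+1)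
  (\sum_(i < K) chebW z i.+1 ^+ 2) (chebW_conv z K)) -?gamE //;
  [|exact: sum_chebW | exact: sum_chebW_sqr | exact: chebW_conv_closed].
rewrite /transfer_inv mxtraceD mxtraceZ mxtrace_tri_inv trww sum_w_entry_sqr.
by ring.
Qed.

End Inverse.

Lemma mulmx_fixed_small_eq0 {R : realFieldType} {K} {P : 'M[R]_K} {v : 'cV[R]_K} {b : R} :
  (forall i j, `|P i j| <= b) -> K%:R * b < 1 -> P *m v = v -> v = 0.
Proof.
move=> Pb Kb Pv; pose s : R := \sum_(i < K) `|v i 0|.
have s_ge0 : 0 <= s by apply: sumr_ge0 => i _.
have s_le : s <= K%:R * b * s.
  rewrite [X in X <= _](eq_bigr (fun i => `|(P *m v) i 0|)) => [|i _]; last by rewrite Pv.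
  apply: (@le_trans _ _ (\sum_(i < K) b * s)); last first.
    by rewrite sumr_const card_ord mulr_natl mulrnAl.
  apply: ler_sum => i _; rewrite mxE /s mulr_sumr.
  apply: (le_trans (ler_norm_sum _ _ _)); apply: ler_sum => l _.
  by rewrite normrM ler_wpM2r.
have s0 : s = 0 by apply/le_anti/andP; split=> //; nra.
apply/matrixP => i j; rewrite ord1 mxE; apply/normr0_eq0/le_anti/andP; split=> //.
by rewrite -s0 /s (bigD1 i) //= lerDl sumr_ge0.
Qed.

Lemma mxpow_entry_bound (R : numDomainType) K (P : 'M[R]_K) (b : R) : 0 <= b ->
  (forall i j, `|P i j| <= b) -> forall m i j, `|(P ^+ m) i j| <= (K%:R * b) ^+ m.
Proof.
move=> b0 Pb; elim=> [|m IH] i j.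
  by rewrite expr0 mxE; case: (i == j); rewrite ?normr1 ?normr0.
rewrite exprSr mxE; apply: (le_trans (ler_norm_sum _ _ _)).
apply: (@le_trans _ _ (\sum_(l < K) (K%:R * b) ^+ m * b)).
  by apply: ler_sum => l _; rewrite normrM ler_pM.
by rewrite sumr_const card_ord exprSr -mulrnAr mulr_natl.
Qed.

Lemma cvg_series_mxtrace_exp {R : realType} {K} {P N : 'M[R]_K.+1} {b : R} :
  (forall i j, `|P i j| <= b) -> K.+1%:R * b < 1 -> N *m (1%:M - P) = 1%:M ->
  series (fun m => \tr (P ^+ m)) @ \oo --> \tr N.
Proof.
move=> Pb Kb NP.
have b0 : 0 <= b := le_trans (normr_ge0 _) (Pb ord0 ord0).
have partial m : series (fun m => \tr (P ^+ m)) m = \tr N - \tr (N *m P ^+ m).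
  have geo : \sum_(i < m) P ^+ i = N *m (1%:M - P ^+ m).
    have -> : 1%:M - P ^+ m = (1%:M - P) *m \sum_(i < m) P ^+ i.
      by rewrite -[1%:M]/1 -opprB subrX1 -mulNr opprB mulmxE.
    by rewrite mulmxA NP mul1mx.
  by rewrite /series /= big_mkord -raddf_sum /= geo mulmxBr mulmx1 raddfB.
set C := \sum_(i < K.+1) \sum_(l < K.+1) `|N i l|.
have tail_bound m : `|\tr (N *m P ^+ m)| <= C * (K.+1%:R * b) ^+ m.
  rewrite /mxtrace /C mulr_suml; apply: (le_trans (ler_norm_sum _ _ _)).
  apply: ler_sum => i _; rewrite mxE mulr_suml.
  apply: (le_trans (ler_norm_sum _ _ _)); apply: ler_sum => l _.
  by rewrite normrM ler_wpM2l // mxpow_entry_bound.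
have tail0 : \tr (N *m P ^+ m) @[m --> \oo] --> 0.
  apply: norm_cvg0; apply: (@squeeze_cvgr _ _ _ _ (fun=> 0) (fun m => C * (K.+1%:R * b) ^+ m)).
  - by apply: nearW => m; rewrite normr_ge0 tail_bound.
  - exact: cvg_cst.
  - rewrite -[0](mulr0 C); apply: cvgMl_tmp; apply: cvg_expr.
    by rewrite ger0_norm ?mulr_ge0.
have -> : series (fun m => \tr (P ^+ m)) = fun m => \tr N - \tr (N *m P ^+ m).
  by apply/funext => m; exact: partial.
by rewrite -[X in _ --> X]subr0; apply: cvgB => //; exact: cvg_cst.
Qed.

Lemma transfer_entry_bound {R : realDomainType} k (x t : R) i j :
  `|(x *: transfer_mx k t) i j| <= `|x| * (`|t| + 1).
Proof.
rewrite !mxE normrM ler_wpM2l //.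
by case: adjacent; rewrite ?normr1 ?lerDl ?lerDr.
Qed.

Lemma cvg_series_Gcoef (R : realType) k (t x : R) (N : 'M[R]_k.+1) :
  k.+1%:R * (`|x| * (`|t| + 1)) < 1 ->
  N *m (1%:M - x *: transfer_mx k.+1 t) = 1%:M ->
  series (fun m => Gcoef k.+1 t m * x ^+ m) @ \oo --> 1 - k.+1%:R + \tr N.
Proof.
move=> small NP.
have := cvg_series_mxtrace_exp (transfer_entry_bound _ x t) small NP; rewrite -cvg_shiftS => trN.
rewrite -cvg_shiftS; set g := (fun m => \tr ((x *: transfer_mx k.+1 t) ^+ m)).
have -> : [sequence series (fun m => Gcoef k.+1 t m * x ^+ m) n.+1]_n
    = fun n => 1 - k.+1%:R + series g n.+1.
  apply/funext => n /=; rewrite /series /= !big_nat_recl //=.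
  rewrite Gcoef0 expr0 mulr1 /g mxtrace1 addrA subrK.
  congr (_ + _); apply: eq_bigr => i _.
  by rewrite Gcoef_mxtrace exprZn mxtraceZ mulrC.
exact: cvgD (cvg_cst _) trN.
Qed.

Lemma normr_mul_subr1_le {R : realDomainType} (x t : R) :
  `|x * (t - 1)| <= `|x| * (`|t| + 1).
Proof. by rewrite normrM ler_wpM2l // -[1 in X in _ <= X]normr1 ler_normB. Qed.

Section SmallX.
Context {R : realFieldType} {n : nat} {x t : R}.
Local Notation y := (x * (t - 1)).
Local Notation z := ((1 - y) / (2 * y)).
Hypotheses (x_neq0 : x != 0) (t_neq1 : t - 1 != 0).
Hypothesis small : n.+1%:R * (`|x| * (`|t| + 1)) < 1.

Lemma chebW_neq0_small : chebW z n.+2 != 0.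
Proof.
apply/eqP => p0; pose v : 'cV[R]_n.+1 := \col_i chebW z i.+1.
have yb i j : `|(y *: adj_mx n) i j| <= `|x| * (`|t| + 1).
  rewrite !mxE normrM -[X in _ <= X]mulr1; apply: ler_pM => //.
    exact: normr_mul_subr1_le.
  by case: adjacent; rewrite ?normr0 ?normr1.
have fixed : (y *: adj_mx n) *m v = v.
  apply/eqP; rewrite eq_sym -subr_eq0.
  by rewrite -[X in X - _]mul1mx -mulmxBl (tri_mx_chebW n x t x_neq0 t_neq1 p0).
have /matrixP/(_ ord0 ord0) := mulmx_fixed_small_eq0 yb small fixed.
by rewrite !mxE chebW1 => /eqP; rewrite oner_eq0.
Qed.

Lemma one_sub_x_gam_neq0 : 1 - 3 * y != 0 -> 1 - x * gam n x t != 0.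
Proof.
move=> one_sub3y_neq0; apply/eqP => g0.
have /eqP := one_sub_transfer_w_col n x t x_neq0 t_neq1 chebW_neq0_small one_sub3y_neq0.
rewrite g0 scale0r mulmxBl mul1mx subr_eq0 eq_sym => /eqP.
move=> /(mulmx_fixed_small_eq0 (transfer_entry_bound _ x t) small) w0.
have := tri_mx_w_col n x t x_neq0 t_neq1 chebW_neq0_small one_sub3y_neq0.
rewrite w0 mulmx0 => /matrixP/(_ ord0 ord0); rewrite !mxE => /eqP.
by rewrite eq_sym oner_eq0.
Qed.

End SmallX.

Theorem theorem2 (R : realType) (k : nat) (t : R) :
  (2 <= k)%N -> t != 1 ->
  exists2 e : R, 0 < e &
    forall x : R, 0 < `|x| < e ->
      series (fun n => Gcoef k t n * x ^+ n) @ \oo --> Gk_closed k x t.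
Proof.
case: k => [|[|n]] // _ t1; have t1' : t - 1 != 0 by rewrite subr_eq0.
have c_gt0 : 0 < n.+3%:R * (`|t| + 1) by rewrite mulr_gt0 // ltr_pwDr.
exists (n.+3%:R * (`|t| + 1))^-1; first by rewrite invr_gt0.
move=> x /andP[x_gt0 xe]; have x0 : x != 0 by rewrite -normr_gt0.
have small3 : n.+3%:R * (`|x| * (`|t| + 1)) < 1.
  by rewrite mulrCA -ltr_pdivlMr // div1r.
have small : n.+2%:R * (`|x| * (`|t| + 1)) < 1.
  by apply: le_lt_trans small3; rewrite ler_wpM2r ?ler_nat // mulr_ge0 ?addr_ge0.
have y_small : 3 * `|x * (t - 1)| < 1.
  apply: le_lt_trans small3; apply: ler_pM; rewrite ?ler_nat //.
  exact: normr_mul_subr1_le.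
have y_le := ler_norm (x * (t - 1)); have := ler_norm (- (x * (t - 1))).
rewrite normrN => y_ge.
have one_sub3y_neq0 : 1 - 3 * (x * (t - 1)) != 0 by rewrite subr_eq0 eq_sym lt_eqF //; lra.
have one_addy_neq0 : 1 + x * (t - 1) != 0 by rewrite gt_eqF //; lra.
have one_add3y_neq0 : 1 + 3 * (x * (t - 1)) != 0 by rewrite gt_eqF //; lra.
have p0 := chebW_neq0_small x0 t1' small.
have g0 := one_sub_x_gam_neq0 x0 t1' small one_sub3y_neq0.
have -> : Gk_closed n.+2 x t = 1 - n.+2%:R + \tr (transfer_inv n.+1 x t).
  by rewrite mxtrace_transfer_inv //; ring.
apply: cvg_series_Gcoef small _.
exact: mulmx1C (one_sub_transfer_inv n.+1 x t x0 t1' p0 one_sub3y_neq0 g0).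
Qed.
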